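(* Let $(X_n)$ and $(Y_n)$ be sequences of real Banach spaces with $\lim_{n\to\infty}d_{GH}(X_n,Y_n)=0$. Then for every non-principal ultrafilter $\mathcal U$ on $\mathbb N$, the ultraproducts $\prod_{\mathcal U}(X_n)$ and $\prod_{\mathcal U}(Y_n)$ are isometric.
   Context: The Gromov–Hausdorff distance $d_{GH}(X,Y)$ is the infimum of the Hausdorff distance between the images of the closed unit balls $B_X,B_Y$ over all isometric embeddings of the metric spaces $B_X,B_Y$ into a common metric space. The ultraproduct $\prod_{\mathcal U}(X_n)$ is the quotient of $\ell_\infty(X_n)$ by the null space of the seminorm $\|(x_n)\|=\lim_{n\in\mathcal U}\|x_n\|_{X_n}$. *)

From HB Require Import structures.
From mathcomp Require Import all_boot all_order all_algebra.
From mathcomp Require Import all_classical all_reals all_analysis.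
Set Implicit Arguments. Unset Strict Implicit. Unset Printing Implicit Defensive.
Import Order.TTheory GRing.Theory Num.Theory.
Import numFieldNormedType.Exports.
Local Open Scope classical_set_scope.
Local Open Scope ring_scope.

Definition is_metric {R : realType} {Z : Type} (d : Z -> Z -> R) : Prop :=
  (forall x y, 0 <= d x y) /\ (forall x y, d x y = 0 <-> x = y) /\
  (forall x y, d x y = d y x) /\ (forall x y z, d x z <= d x y + d y z).

Definition hausdorff_dist {R : realType} {Z : Type} (d : Z -> Z -> R)
  (A B : set Z) : \bar R :=
  maxe (ereal_sup [set ereal_inf [set (d a b)%:E | b in B] | a in A])
       (ereal_sup [set ereal_inf [set (d a b)%:E | a in A] | b in B]).

Definition unit_ball {R : realType} (X : normedModType R) : set X :=
  [set x | `|x| <= 1].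

Definition ball_isometry {R : realType} (X : normedModType R) {Z : Type}
  (d : Z -> Z -> R) (f : X -> Z) : Prop :=
  forall x y, `|x| <= 1 -> `|y| <= 1 -> d (f x) (f y) = `|x - y|.

Definition dGH {R : realType} (X Y : normedModType R) : \bar R :=
  ereal_inf [set r | exists (Z : Type) (d : Z -> Z -> R) (f : X -> Z) (g : Y -> Z),
     [/\ is_metric d, ball_isometry d f, ball_isometry d g &
         r = hausdorff_dist d (f @` @unit_ball R X) (g @` @unit_ball R Y)]].

Definition linfty_bounded {R : realType} (X : nat -> normedModType R)
  (x : forall n, X n) : Prop := exists M : R, forall n, `|x n| <= M.

Definition ulim {R : realType} (U : set_system nat) (u : nat -> R) : R :=
  lim (u @ U).

Definition useminorm {R : realType} (X : nat -> normedModType R)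
  (U : set_system nat) (x : forall n, X n) : R :=
  ulim U (fun n => `|x n|).

(* The ultraproduct prod_U X_n is the quotient of l_infty(X_n) by the null
   space of useminorm.  A linear isometry of prod_U X_n onto prod_U Y_n is
   exactly a map T : l_infty(X_n) -> l_infty(Y_n) that is linear modulo the
   null space, preserves the seminorm, and is onto modulo the null space. *)
Definition ultraproducts_isometric {R : realType} (X Y : nat -> normedModType R)
  (U : set_system nat) : Prop :=
  exists T : (forall n, X n) -> (forall n, Y n),
  [/\ (forall x, linfty_bounded x -> linfty_bounded (T x)),
      (forall (a : R) x y, linfty_bounded x -> linfty_bounded y ->
         useminorm U (fun n => T (fun k => a *: x k + y k) n - (a *: T x n + T y n)) = 0),
      (forall x, linfty_bounded x -> useminorm U (T x) = useminorm U x) &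
      (forall y, linfty_bounded y -> exists2 x, linfty_bounded x &
         useminorm U (fun n => T x n - y n) = 0)].

(* The Gromov-Hausdorff hypothesis gives maps phi_n between the unit balls of
   X_n and Y_n with distortion and codensity at most eps_n -> 0.  Put
   s_n = sqrt eps_n and T x = ((phi_n (s_n x_n) - phi_n 0) / s_n)_n.  For a
   bounded x, s_n x_n eventually lies in the unit ball, where T distorts
   distances by at most eps_n / s_n = s_n -> 0.  Hence T induces an isometry of
   prod_U X_n onto prod_U Y_n sending 0 to 0, which is linear by the Mazur-Ulam
   theorem.  Mazur-Ulam is proved by Vaisala's argument, directly for a seminorm
   on a subspace, i.e. modulo the null space of lim_U ||.||. *)

From HB Require Import structures.
From mathcomp Require Import all_boot all_order all_algebra.
From mathcomp Require Import all_classical all_reals all_analysis.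
From mathcomp Require Import lra ring.
Import Order.TTheory GRing.Theory Num.Theory.
Import numFieldNormedType.Exports.
Local Open Scope classical_set_scope.
Local Open Scope ring_scope.
Set Implicit Arguments. Unset Strict Implicit. Unset Printing Implicit Defensive.

(** * Seminorms on subspaces and the Mazur-Ulam theorem *)

(* A seminorm [snorm] on the subspace [sdom] presents the normed space [sdom]
   modulo the null space of [snorm], in which [x] and [y] are equal when
   [x ≡[S] y]. *)
Record subseminorm (R : numDomainType) (V : lmodType R) := SubSeminorm {
  sdom : set V;
  snorm : V -> R;
  sdom0 : sdom 0;
  sdomD : forall x y, sdom x -> sdom y -> sdom (x + y);
  sdomZ : forall (a : R) x, sdom x -> sdom (a *: x);
  snormD : forall x y, sdom x -> sdom y -> snorm (x + y) <= snorm x + snorm y;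
  snormZ : forall (a : R) x, sdom x -> snorm (a *: x) = `|a| * snorm x }.

Notation "x ≡[ S ] y" := (snorm S (x - y) = 0) (at level 70, format "x  ≡[ S ]  y").

Section SubSeminormTheory.
Variables (R : realFieldType) (V : lmodType R) (S : subseminorm V).
Local Notation D := (sdom S).
Local Notation p := (snorm S).
Local Notation "x ≡ y" := (x ≡[S] y) (at level 70).

Lemma sdomN x : D x -> D (- x).
Proof. by move=> Dx; rewrite -scaleN1r; exact: sdomZ. Qed.

Lemma sdomB x y : D x -> D y -> D (x - y).
Proof. by move=> Dx Dy; apply: sdomD => //; exact: sdomN. Qed.

Lemma snorm0 : p 0 = 0.
Proof. by rewrite -(scale0r (0 : V)) snormZ ?normr0 ?mul0r //; exact: sdom0. Qed.

Lemma snormN x : D x -> p (- x) = p x.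
Proof. by move=> Dx; rewrite -scaleN1r snormZ // normrN normr1 mul1r. Qed.

Lemma snorm_ge0 x : D x -> 0 <= p x.
Proof.
move=> Dx; have := snormD Dx (sdomN Dx).
by rewrite subrr snorm0 snormN //; lra.
Qed.

Lemma snorm_distrC x y : D x -> D y -> p (x - y) = p (y - x).
Proof. by move=> Dx Dy; rewrite -snormN ?opprB //; exact: sdomB. Qed.

Lemma snorm_distD x y z : D x -> D y -> D z -> p (x - z) <= p (x - y) + p (y - z).
Proof.
move=> Dx Dy Dz; have -> : x - z = (x - y) + (y - z) by rewrite addrA subrK.
by apply: snormD; exact: sdomB.
Qed.

Lemma sequiv_refl x : x ≡ x.
Proof. by rewrite subrr snorm0. Qed.

Lemma sequiv_sym x y : D x -> D y -> x ≡ y -> y ≡ x.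
Proof. by move=> Dx Dy; rewrite snorm_distrC. Qed.

Lemma snorm_equivl x x' y : D x -> D x' -> D y -> x ≡ x' -> p (x - y) = p (x' - y).
Proof.
move=> Dx Dx' Dy xx'; apply/eqP; rewrite eq_le.
have := snorm_distD Dx Dx' Dy; rewrite xx' add0r => ->.
by have := snorm_distD Dx' Dx Dy; rewrite (snorm_distrC Dx' Dx) xx' add0r => ->.
Qed.

Lemma snorm_equivr x y y' : D x -> D y -> D y' -> y ≡ y' -> p (x - y) = p (x - y').
Proof. by move=> Dx Dy Dy' yy'; rewrite !(snorm_distrC Dx) // (snorm_equivl Dy Dy' Dx). Qed.

Lemma sequiv_trans y x z : D x -> D y -> D z -> x ≡ y -> y ≡ z -> x ≡ z.
Proof. by move=> Dx Dy Dz xy; rewrite (snorm_equivl Dx Dy Dz xy). Qed.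

Lemma sequivD x x' y y' : D x -> D x' -> D y -> D y' -> x ≡ x' -> y ≡ y' ->
  x + y ≡ x' + y'.
Proof.
move=> Dx Dx' Dy Dy' xx' yy'.
have Dxy : D (x + y - (x' + y')) by apply: sdomB; exact: sdomD.
apply/eqP; rewrite eq_le snorm_ge0 // andbT.
have -> : x + y - (x' + y') = (x - x') + (y - y') by rewrite opprD addrACA.
by have := snormD (sdomB Dx Dx') (sdomB Dy Dy'); rewrite xx' yy' addr0.
Qed.

Lemma sequivZ (a : R) x y : D x -> D y -> x ≡ y -> a *: x ≡ a *: y.
Proof. by move=> Dx Dy xy; rewrite -scalerBr snormZ ?xy ?mulr0 //; exact: sdomB. Qed.

Lemma sequivN x y : D x -> D y -> x ≡ y -> - x ≡ - y.
Proof. by move=> Dx Dy /(sequivZ (-1) Dx Dy); rewrite !scaleN1r. Qed.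

Lemma sequivZ_cancel (a : R) x y : a != 0 -> D x -> D y -> a *: x ≡ a *: y -> x ≡ y.
Proof.
move=> a0 Dx Dy; rewrite -scalerBr snormZ; last exact: sdomB.
by move=> /eqP; rewrite mulf_eq0 normr_eq0 (negbTE a0) => /eqP.
Qed.

End SubSeminormTheory.

Record sisometry (R : numDomainType) (V W : lmodType R) (S : subseminorm V)
    (S' : subseminorm W) (f : V -> W) : Prop := SIsometry {
  sisometry_dom : forall x, sdom S x -> sdom S' (f x);
  sisometry_dist : forall x y, sdom S x -> sdom S y ->
    snorm S' (f x - f y) = snorm S (x - y) }.

Definition sonto (R : numDomainType) (V W : lmodType R) (S : subseminorm V)
    (S' : subseminorm W) (f : V -> W) :=
  forall y, sdom S' y -> exists2 x, sdom S x & f x ≡[S'] y.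

Definition onto_isometry (R : numDomainType) (V W : lmodType R) (S : subseminorm V)
    (S' : subseminorm W) (f : V -> W) :=
  sisometry S S' f /\ sonto S S' f.

Ltac sdom_solve := repeat first
  [ assumption | apply: sdom0 | apply: sdomD | apply: sdomZ | apply: sdomN
  | match goal with
    | H : sisometry _ _ ?f |- sdom _ (?f _) => apply: (sisometry_dom H)
    | H : onto_isometry _ _ ?f |- sdom _ (?f _) => apply: (sisometry_dom H.1)
    end ].

Lemma sisometry_equiv (R : numDomainType) (V W : lmodType R) (S : subseminorm V)
    (S' : subseminorm W) (f : V -> W) x y :
  sisometry S S' f -> sdom S x -> sdom S y -> x ≡[S] y -> f x ≡[S'] f y.
Proof. by move=> fi Dx Dy; rewrite (sisometry_dist fi). Qed.

Definition reflection (R : pzRingType) (V : lmodType R) (c x : V) := c - x.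

Section Reflection.
Variables (R : numFieldType) (V : lmodType R).
Implicit Types (a b c w : V).

Lemma reflectionK c : involutive (reflection c).
Proof. exact: subKr. Qed.

Lemma reflectionDl a b : reflection (a + b) a = b.
Proof. by rewrite /reflection addrAC subrr add0r. Qed.

Lemma reflectionDr a b : reflection (a + b) b = a.
Proof. by rewrite /reflection addrK. Qed.

Lemma reflection_half c : reflection c (2^-1 *: c) = 2^-1 *: c.
Proof.
rewrite /reflection -{1}[c]scale1r -scalerBl; congr (_ *: _).
by rewrite [X in X - _](splitr 1) mul1r addrK.
Qed.

Lemma reflectionB c w : reflection c w - w = 2%:R *: (2^-1 *: c - w).
Proof.
rewrite /reflection scalerBr scalerA mulfV ?pnatr_eq0 // scale1r.
by rewrite scaler_nat mulr2n opprD addrA.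
Qed.

End Reflection.

Section SubIsometry.
Variables (R : realFieldType) (V W Z : lmodType R).
Variables (S : subseminorm V) (S' : subseminorm W) (S'' : subseminorm Z).

Lemma sisometry_comp (f : V -> W) (g : W -> Z) :
  sisometry S S' f -> sisometry S' S'' g -> sisometry S S'' (g \o f).
Proof.
move=> fi gi; split=> [x Dx|x y Dx Dy] /=; first by sdom_solve.
by rewrite (sisometry_dist gi) ?(sisometry_dist fi) //; sdom_solve.
Qed.

Lemma onto_isometry_comp (f : V -> W) (g : W -> Z) :
  onto_isometry S S' f -> onto_isometry S' S'' g -> onto_isometry S S'' (g \o f).
Proof.
move=> [fi fo] [gi go]; split; first exact: sisometry_comp.
move=> y Dy; have [w Dw gwy] := go y Dy; have [x Dx fxw] := fo w Dw.
exists x => //=; apply: (sequiv_trans (y := g w)); try sdom_solve.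
by apply: (sisometry_equiv gi); sdom_solve.
Qed.

Lemma onto_isometry_inverse (f : V -> W) : onto_isometry S S' f ->
  exists g : W -> V, [/\ onto_isometry S' S g,
    forall y, sdom S' y -> f (g y) ≡[S'] y & forall x, sdom S x -> g (f x) ≡[S] x].
Proof.
move=> [fi fo]; have /choice[g gP] :
    forall y, exists x, sdom S' y -> sdom S x /\ f x ≡[S'] y.
  move=> y; have [Dy|nDy] := pselect (sdom S' y); last by exists 0.
  by have [x Dx fxy] := fo y Dy; exists x.
have Dg y : sdom S' y -> sdom S (g y) by move=> /gP[].
have fg y : sdom S' y -> f (g y) ≡[S'] y by move=> /gP[].
have gi : sisometry S' S g.
  split=> // y y' Dy Dy'; have Dgy := Dg y Dy; have Dgy' := Dg y' Dy'.
  rewrite -(sisometry_dist fi) // (snorm_equivl _ _ _ (fg y Dy)); try sdom_solve.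
  by rewrite (snorm_equivr _ _ _ (fg y' Dy')); sdom_solve.
have gf x : sdom S x -> g (f x) ≡[S] x.
  by move=> Dx; rewrite -(sisometry_dist fi) ?(fg _ (sisometry_dom fi Dx)) //; sdom_solve.
by exists g; split=> //; split=> // x Dx; exists (f x); [sdom_solve | exact: gf].
Qed.

Lemma onto_isometry_reflection (c : V) : sdom S c -> onto_isometry S S (reflection c).
Proof.
move=> Dc; split=> [|y Dy]; last first.
  by exists (reflection c y); rewrite /reflection ?subKr ?subrr ?snorm0 //; sdom_solve.
split=> [x Dx|x y Dx Dy]; rewrite /reflection; first by sdom_solve.
by rewrite opprB addrC addrA subrK snorm_distrC.
Qed.

Lemma sequiv_reflection (c w : V) : sdom S c -> sdom S w ->
  reflection c w ≡[S] w -> w ≡[S] 2^-1 *: c.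
Proof.
move=> Dc Dw; rewrite reflectionB snormZ ?normr_nat; last by sdom_solve.
by move=> /eqP; rewrite mulf_eq0 pnatr_eq0 /= snorm_distrC //; [move/eqP | sdom_solve].
Qed.

End SubIsometry.

Section Vaisala.
Variables (R : realType) (V : lmodType R) (S : subseminorm V) (a b : V).
Hypotheses (Da : sdom S a) (Db : sdom S b).
Local Notation D := (sdom S).
Local Notation p := (snorm S).
Local Notation "x ≡ y" := (x ≡[S] y) (at level 70).
Local Notation z := (2^-1 *: (a + b)).
Local Notation psi := (reflection (a + b)).

Definition fixing_isometry (g : V -> V) := [/\ onto_isometry S S g, g a ≡ a & g b ≡ b].

Let Dz : D z. Proof. by sdom_solve. Qed.
Let psi_oi : onto_isometry S S psi. Proof. by apply: onto_isometry_reflection; sdom_solve. Qed.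

Lemma fixing_isometry_comp g h :
  fixing_isometry g -> fixing_isometry h -> fixing_isometry (g \o h).
Proof.
move=> [gi ga gb] [hi ha hb]; split; first exact: onto_isometry_comp hi gi.
- by apply: (sequiv_trans (y := g a)) => /=; try apply: (sisometry_equiv gi.1); sdom_solve.
- by apply: (sequiv_trans (y := g b)) => /=; try apply: (sisometry_equiv gi.1); sdom_solve.
Qed.

Lemma fixing_isometry_inverse g : fixing_isometry g ->
  exists2 h, fixing_isometry h & forall x, D x -> h (g x) ≡ x.
Proof.
move=> [gi ga gb]; have [h [hi gh hg]] := onto_isometry_inverse gi.
have h_fix c : D c -> g c ≡ c -> h c ≡ c.
  move=> Dc gc; apply: (sequiv_trans (y := h (g c))); try sdom_solve; last exact: hg.
  by apply: (sisometry_equiv hi.1); try sdom_solve; apply: sequiv_sym; sdom_solve.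
by exists h => //; split=> //; exact: h_fix.
Qed.

Lemma fixing_isometry_conj g : fixing_isometry g -> fixing_isometry (psi \o g \o psi).
Proof.
move=> [gi ga gb]; split.
- exact: onto_isometry_comp (onto_isometry_comp psi_oi gi) psi_oi.
- rewrite /= reflectionDl -[X in _ - X](reflectionDr a b).
  by apply: (sisometry_equiv psi_oi.1); sdom_solve.
- rewrite /= reflectionDr -[X in _ - X](reflectionDl a b).
  by apply: (sisometry_equiv psi_oi.1); sdom_solve.
Qed.

Lemma fixing_isometry_mid_le g : fixing_isometry g -> p (g z - z) <= 2 * p (z - a).
Proof.
move=> [[gi _] ga _].
have := snorm_distD (sisometry_dom gi Dz) (sisometry_dom gi Da) Dz.
rewrite (sisometry_dist gi) // (snorm_equivl _ _ _ ga) ?(snorm_distrC Da Dz); try sdom_solve.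
lra.
Qed.

(* Vaisala's trick: with [h] an inverse of [g], [psi \o h \o psi \o g] moves [z]
   twice as far as [g] does. *)
Lemma fixing_isometry_double g : fixing_isometry g ->
  exists2 g', fixing_isometry g' & p (g' z - z) = 2 * p (g z - z).
Proof.
move=> g_fix; have [[gi _] _ _] := g_fix.
have [h h_fix hg] := fixing_isometry_inverse g_fix; have [[hi _] _ _] := h_fix.
exists (psi \o h \o psi \o g).
  by apply: fixing_isometry_comp => //; exact: fixing_isometry_conj.
rewrite /= -{2}reflection_half (sisometry_dist psi_oi.1); try sdom_solve.
rewrite (snorm_equivr _ _ _ (sequiv_sym _ _ (hg z Dz))); try sdom_solve.
rewrite (sisometry_dist hi); try sdom_solve.
by rewrite reflectionB snormZ ?normr_nat ?(snorm_distrC Dz); sdom_solve.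
Qed.

Lemma fixing_isometry_mid g : fixing_isometry g -> g z ≡ z.
Proof.
move=> g_fix; have [[gi _] _ _] := g_fix.
pose E := [set p (g' z - z) | g' in fixing_isometry].
have fix_id : fixing_isometry id.
  split; try exact: sequiv_refl.
  by split=> // y Dy; exists y => //; exact: sequiv_refl.
have E0 : E 0 by exists id => //; rewrite subrr snorm0.
have E_sup : has_sup E.
  split; first by exists 0.
  by exists (2 * p (z - a)) => _ [g' g'_fix <-]; exact: fixing_isometry_mid_le.
have supE_le : sup E <= sup E / 2.
  apply: ge_sup; first by exists 0.
  move=> _ [g' g'_fix <-]; have [g'' g''_fix double] := fixing_isometry_double g'_fix.
  by rewrite ler_pdivlMr // mulrC -double; apply: sup_upper_bound => //; exists g''.
have gE : p (g z - z) <= sup E by apply: sup_upper_bound => //; exists g.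
have := sup_upper_bound E_sup E0; have := snorm_ge0 (sdomB (sisometry_dom gi Dz) Dz).
lra.
Qed.

End Vaisala.

Lemma le0_bounded_mulrn (R : archiRealFieldType) (d c : R) :
  (forall N : nat, d * N%:R <= c) -> d <= 0.
Proof.
move=> dNc; rewrite leNgt; apply/negP => d_gt0.
have := truncnS_gt (c / d); rewrite ltNge => /negP; apply.
by rewrite ler_pdivlMr // mulrC.
Qed.

Section MazurUlam.
Variables (R : realType) (V W : lmodType R) (S : subseminorm V) (S' : subseminorm W).
Variable F : V -> W.
Hypothesis F_oi : onto_isometry S S' F.
Local Notation D := (sdom S).
Local Notation p := (snorm S).
Local Notation p' := (snorm S').
Local Notation "x ≡ y" := (x ≡[S'] y) (at level 70).

Let F_iso := F_oi.1.

(* [psi \o G \o psi' \o F] fixes [a] and [b], hence [z]; thus [psi'] fixes [F z]. *)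
Lemma sisometry_midpoint a b : D a -> D b ->
  F (2^-1 *: (a + b)) ≡ 2^-1 *: (F a + F b).
Proof.
move=> Da Db; have [G [G_oi FG GF]] := onto_isometry_inverse F_oi.
have DFab : sdom S' (F a + F b) by sdom_solve.
have psi_oi := onto_isometry_reflection (sdomD Da Db).
have psi'_oi := onto_isometry_reflection DFab.
set psi := reflection (a + b); set psi' := reflection (F a + F b).
set z := 2^-1 *: (a + b); have Dz : D z by sdom_solve.
have g_fix : fixing_isometry S a b (psi \o G \o psi' \o F).
  split; first exact: onto_isometry_comp
    (onto_isometry_comp (onto_isometry_comp F_oi psi'_oi) G_oi) psi_oi.
  - rewrite /= /psi' reflectionDl -[X in _ - X](reflectionDr a b).
    by apply: (sisometry_equiv psi_oi.1); [sdom_solve | sdom_solve | exact: GF].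
  - rewrite /= /psi' reflectionDr -[X in _ - X](reflectionDl a b).
    by apply: (sisometry_equiv psi_oi.1); [sdom_solve | sdom_solve | exact: GF].
have /= gz := fixing_isometry_mid Da Db g_fix.
have Gz : G (psi' (F z)) ≡[S] z.
  rewrite -[X in _ - X]reflection_half -[G _](reflectionK (a + b)).
  by apply: (sisometry_equiv psi_oi.1); [sdom_solve | sdom_solve | exact: gz].
apply: sequiv_reflection; try sdom_solve.
apply: (sequiv_trans (y := F (G (psi' (F z))))); try sdom_solve.
  by apply: sequiv_sym; try sdom_solve; apply: FG; sdom_solve.
by apply: (sisometry_equiv F_iso); sdom_solve.
Qed.

Hypothesis F0 : F 0 = 0.

Lemma sisometry_half x : D x -> F (2^-1 *: x) ≡ 2^-1 *: F x.
Proof. by move=> Dx; have := sisometry_midpoint Dx (sdom0 S); rewrite !addr0 F0 addr0. Qed.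

Lemma sisometry_additive x y : D x -> D y -> F (x + y) ≡ F x + F y.
Proof.
move=> Dx Dy; apply: (sequivZ_cancel (a := 2^-1)); try sdom_solve.
  by rewrite invr_eq0 pnatr_eq0.
apply: (sequiv_trans (y := F (2^-1 *: (x + y)))); try sdom_solve.
  by apply: sequiv_sym; try apply: sisometry_half; sdom_solve.
exact: sisometry_midpoint.
Qed.

Lemma sisometry_opp x : D x -> F (- x) ≡ - F x.
Proof.
move=> Dx; have := sisometry_additive Dx (sdomN Dx).
by rewrite subrr F0 sub0r snormN ?opprK 1?addrC //; sdom_solve.
Qed.

Lemma sisometry_natmul n x : D x -> F (n%:R *: x) ≡ n%:R *: F x.
Proof.
move=> Dx; elim: n => [|n IHn]; first by rewrite !scale0r F0 subrr snorm0.
rewrite -addn1 natrD !scalerDl !scale1r.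
apply: (sequiv_trans (y := F (n%:R *: x) + F x)); try sdom_solve.
  by apply: sisometry_additive; sdom_solve.
by apply: sequivD => //; try sdom_solve; exact: sequiv_refl.
Qed.

Lemma sisometry_intmul (m : int) x : D x -> F (m%:~R *: x) ≡ m%:~R *: F x.
Proof.
move=> Dx; case: m => n; first exact: sisometry_natmul.
rewrite NegzE intrN !scaleNr.
apply: (sequiv_trans (y := - F (n.+1%:R *: x))); try sdom_solve.
  by apply: sisometry_opp; sdom_solve.
by apply: sequivN; try apply: sisometry_natmul; sdom_solve.
Qed.

(* [defect] is bounded and [defect (N * t) = N * defect t], so it vanishes. *)
Local Notation defect t x := (p' (F (t *: x) - t *: F x)).

Lemma defect_le t x : D x -> defect t x <= p x + p' (F x).
Proof.
move=> Dx; set m : R := (Num.floor t)%:~R.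
have tm : `|t - m| <= 1.
  have /andP[mt tm] := floor_itv t; rewrite intrD -/m in tm.
  by rewrite ger0_norm ?subr_ge0 //; lra.
have e1 : p' (F (t *: x) - F (m *: x)) = `|t - m| * p x.
  by rewrite (sisometry_dist F_iso) -?scalerBl 1?snormZ //; sdom_solve.
have e2 : p' (F (m *: x) - m *: F x) = 0 by exact: sisometry_intmul.
have e3 : p' (m *: F x - t *: F x) = `|t - m| * p' (F x).
  by rewrite -scalerBl snormZ 1?distrC //; sdom_solve.
have DFtx : sdom S' (F (t *: x)) by sdom_solve.
have DFmx : sdom S' (F (m *: x)) by sdom_solve.
have DmFx : sdom S' (m *: F x) by sdom_solve.
have DtFx : sdom S' (t *: F x) by sdom_solve.
have := snorm_distD DFmx DmFx DtFx; rewrite e2 e3 add0r => le2.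
apply: le_trans (snorm_distD DFtx DFmx DtFx) _; rewrite e1.
apply: le_trans (lerD (lexx _) le2) _; rewrite -mulrDr; apply: ler_piMl => //.
by apply: addr_ge0; apply: snorm_ge0; sdom_solve.
Qed.

Lemma defect_mulrn (N : nat) t x : D x -> defect (N%:R * t) x = N%:R * defect t x.
Proof.
move=> Dx; rewrite -!scalerA (snorm_equivl _ _ _ (sisometry_natmul N (sdomZ t Dx))).
  by rewrite -scalerBr snormZ ?normr_nat //; sdom_solve.
all: sdom_solve.
Qed.

Lemma sisometry_scale t x : D x -> F (t *: x) ≡ t *: F x.
Proof.
move=> Dx; apply/eqP; rewrite eq_le snorm_ge0 ?andbT; last by sdom_solve.
apply: (@le0_bounded_mulrn _ _ (p x + p' (F x))) => N.
by rewrite mulrC -defect_mulrn // defect_le.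
Qed.

Lemma sisometry_linear (a : R) x y : D x -> D y -> F (a *: x + y) ≡ a *: F x + F y.
Proof.
move=> Dx Dy; apply: (sequiv_trans (y := F (a *: x) + F y)); try sdom_solve.
  by apply: sisometry_additive; sdom_solve.
by apply: sequivD; try apply: sisometry_scale; try exact: sequiv_refl; sdom_solve.
Qed.

End MazurUlam.

(** * Limits along a nonprincipal ultrafilter *)

Section BoundedSeq.
Variable R : realFieldType.
Implicit Types (u v : nat -> R).

Definition bounded_seq u := exists M, forall n, `|u n| <= M.

Lemma bounded_seqD u v : bounded_seq u -> bounded_seq v ->
  bounded_seq (fun n => u n + v n).
Proof.
move=> [M uM] [N vN]; exists (M + N) => n.
exact: le_trans (ler_normD _ _) (lerD (uM n) (vN n)).
Qed.

Lemma bounded_seq_cvg u (l : R) : u @ \oo --> l -> bounded_seq u.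
Proof.
move=> /(cvgP _)/cvg_seq_bounded[M [_ uM]].
by exists (M + 1) => n; apply: uM => //; lra.
Qed.

Lemma cvg0_le_near u (s : nat -> R) : s @ \oo --> 0 ->
  (\forall n \near \oo, `|u n| <= s n) -> u @ \oo --> 0.
Proof.
move=> s0 us; apply/cvgr0Pnorm_le => e e_gt0.
near=> n; apply: le_trans (near us n _) _; first by [].
apply: le_trans (ler_norm _) _; near: n; exact: cvgr0_norm_le.
Unshelve. all: by end_near. Qed.

End BoundedSeq.

Lemma ultra_fmap (T S : Type) (F : set_system T) (u : T -> S) :
  UltraFilter F -> UltraFilter (u @ F).
Proof.
move=> F_ultra; split; first exact: fmap_proper_filter.
move=> G G_proper FG; rewrite predeqE => A; split=> [GA|]; last exact: FG.
have [//|FnA] := in_ultra_setVsetC (u @^-1` A) F_ultra.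
by have /filter_ex[? []] : G (A `&` ~` A) by apply: filterI => //; exact: FG.
Qed.

Section UltraLimit.
Variables (R : realType) (U : set_system nat).
Hypotheses (U_ultra : UltraFilter U) (U_nonprincipal : forall n, ~ U [set n]).
Implicit Types (u v : nat -> R).

Lemma nonprincipal_ultra_ge N : U [set n | (N <= n)%N].
Proof.
elim: N => [|N IHN]; first by apply: filterS filterT.
have [/U_nonprincipal//|UnN] := in_ultra_setVsetC [set N] U_ultra.
apply: filterS (filterI IHN UnN) => n /= [Nn /eqP nN].
by rewrite ltn_neqAle eq_sym nN.
Qed.

Lemma nonprincipal_ultra_finer : U `=>` \oo.
Proof. by move=> A [N _ NA]; apply: filterS NA (nonprincipal_ultra_ge N). Qed.

Lemma ulim_cvg u : bounded_seq u -> u @ U --> ulim U u.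
Proof.
move=> [M uM]; have := @segment_compact R (- M) M.
rewrite compact_ultra => /(_ (u @ U) (ultra_fmap u U_ultra)) [|l [_ ul]].
  apply: (@filterS _ U _ setT); last exact: filterT.
  by move=> n _; rewrite /= in_itv /= -ler_norml.
by rewrite /ulim (cvg_lim _ ul).
Qed.

Lemma cvg_ulim u (l : R) : u @ U --> l -> ulim U u = l.
Proof. by move=> ul; rewrite /ulim (cvg_lim _ ul). Qed.

Lemma cvgn_ulim u (l : R) : u @ \oo --> l -> ulim U u = l.
Proof.
move=> ul; apply: cvg_ulim; apply: cvg_trans ul => A.
exact: nonprincipal_ultra_finer.
Qed.

Lemma ulimD u v : bounded_seq u -> bounded_seq v ->
  ulim U (fun n => u n + v n) = ulim U u + ulim U v.
Proof. by move=> bu bv; apply: cvg_ulim; exact: cvgD (ulim_cvg bu) (ulim_cvg bv). Qed.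

Lemma ulimZ (c : R) u : bounded_seq u -> ulim U (fun n => c * u n) = c * ulim U u.
Proof. by move=> bu; apply: cvg_ulim; exact: cvgM (cvg_cst c) (ulim_cvg bu). Qed.

Lemma ulim_le u v : bounded_seq u -> bounded_seq v -> (forall n, u n <= v n) ->
  ulim U u <= ulim U v.
Proof.
move=> bu bv uv; apply: ler_lim; [exact: cvgP (ulim_cvg bu)|exact: cvgP (ulim_cvg bv)|].
by apply: filterS filterT => n _; exact: uv.
Qed.

Lemma eq_ulim_near u v (s : nat -> R) : bounded_seq v -> s @ \oo --> 0 ->
  (\forall n \near \oo, `|u n - v n| <= s n) -> ulim U u = ulim U v.
Proof.
move=> bv s0 uvs; have uv0 := cvg0_le_near s0 uvs.
have -> : u = (fun n => v n + (u n - v n)) by apply: funext => n; rewrite addrC subrK.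
by rewrite ulimD ?(cvgn_ulim uv0) ?addr0 //; exact: bounded_seq_cvg uv0.
Qed.

End UltraLimit.

(** * The ultraproduct seminorm *)

Section DependentProduct.
Variables (R : pzRingType) (X : nat -> lmodType R).

Definition dprod := forall n, X n.
HB.instance Definition _ := gen_eqMixin dprod.
HB.instance Definition _ := gen_choiceMixin dprod.

Let dzero : dprod := fun n => 0.
Let dadd (x y : dprod) : dprod := fun n => x n + y n.
Let dopp (x : dprod) : dprod := fun n => - x n.
Let dscale (a : R) (x : dprod) : dprod := fun n => a *: x n.

Let daddA : associative dadd.
Proof. by move=> x y z; apply: functional_extensionality_dep => n; exact: addrA. Qed.
Let daddC : commutative dadd.
Proof. by move=> x y; apply: functional_extensionality_dep => n; exact: addrC. Qed.
Let dadd0 : left_id dzero dadd.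
Proof. by move=> x; apply: functional_extensionality_dep => n; exact: add0r. Qed.
Let daddN : left_inverse dzero dopp dadd.
Proof. by move=> x; apply: functional_extensionality_dep => n; exact: addNr. Qed.
HB.instance Definition _ := GRing.isZmodule.Build dprod daddA daddC dadd0 daddN.

Let dscaleA a b x : dscale a (dscale b x) = dscale (a * b) x.
Proof. by apply: functional_extensionality_dep => n; exact: scalerA. Qed.
Let dscale1 : left_id 1 dscale.
Proof. by move=> x; apply: functional_extensionality_dep => n; exact: scale1r. Qed.
Let dscaleDr : right_distributive dscale +%R.
Proof. by move=> a x y; apply: functional_extensionality_dep => n; exact: scalerDr. Qed.
Let dscaleDl x : {morph dscale^~ x : a b / a + b}.
Proof. by move=> a b; apply: functional_extensionality_dep => n; exact: scalerDl. Qed.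
HB.instance Definition _ :=
  GRing.Zmodule_isLmodule.Build R dprod dscaleA dscale1 dscaleDr dscaleDl.

Lemma dprod0E n : (0 : dprod) n = 0. Proof. by []. Qed.
Lemma dprodDE (x y : dprod) n : (x + y) n = x n + y n. Proof. by []. Qed.
Lemma dprodNE (x : dprod) n : (- x) n = - x n. Proof. by []. Qed.
Lemma dprodZE a (x : dprod) n : (a *: x) n = a *: x n. Proof. by []. Qed.
Definition dprodE := (dprod0E, dprodDE, dprodNE, dprodZE).

End DependentProduct.

Section UltraSeminorm.
Variables (R : realType) (X : nat -> normedModType R) (U : set_system nat).
Hypothesis U_ultra : UltraFilter U.
Local Notation DX := (@dprod R (fun n => X n)).
Implicit Types x y : DX.

Lemma bounded_seq_norm x : linfty_bounded x -> bounded_seq (fun n => `|x n|).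
Proof. by move=> [M xM]; exists M => n; rewrite normr_id. Qed.

Lemma linfty_bounded0 : linfty_bounded (0 : DX).
Proof. by exists 0 => n; rewrite dprodE normr0. Qed.

Lemma linfty_boundedD x y : linfty_bounded x -> linfty_bounded y -> linfty_bounded (x + y).
Proof.
move=> [M xM] [N yN]; exists (M + N) => n; rewrite dprodE.
exact: le_trans (ler_normD _ _) (lerD (xM n) (yN n)).
Qed.

Lemma linfty_boundedZ (a : R) x : linfty_bounded x -> linfty_bounded (a *: x).
Proof. by move=> [M xM]; exists (`|a| * M) => n; rewrite dprodE normrZ ler_wpM2l ?xM. Qed.

Lemma useminormD x y : linfty_bounded x -> linfty_bounded y ->
  useminorm U (x + y) <= useminorm U x + useminorm U y.
Proof.
move=> bx bY; rewrite /useminorm -ulimD; try exact: bounded_seq_norm.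
apply: ulim_le; first exact: bounded_seq_norm (linfty_boundedD bx bY).
  by apply: bounded_seqD; exact: bounded_seq_norm.
by move=> n; rewrite dprodE; exact: ler_normD.
Qed.

Lemma useminormZ (a : R) x : linfty_bounded x ->
  useminorm U (a *: x) = `|a| * useminorm U x.
Proof.
move=> bx; rewrite /useminorm -ulimZ; last exact: bounded_seq_norm.
by congr ulim; apply: funext => n; rewrite dprodE normrZ.
Qed.

Definition ultra_subseminorm : subseminorm DX :=
  SubSeminorm linfty_bounded0 linfty_boundedD linfty_boundedZ useminormD useminormZ.

End UltraSeminorm.

(** * Approximate isometries and the blow-up map *)

Section ApproxIsometry.
Variables (R : realType) (X Y : normedModType R).

Definition approx_isometry (phi : X -> Y) (e : R) :=
  (forall x y, `|x| <= 1 -> `|y| <= 1 -> `| `|phi x - phi y| - `|x - y| | <= e) /\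
  (forall y, `|y| <= 1 -> exists2 x, `|x| <= 1 & `|phi x - y| <= e).

Lemma approx_isometry_cst0 : approx_isometry (fun=> 0) 2.
Proof.
split=> [x y x1 y1|y y1]; last by exists 0; rewrite ?normr0 // sub0r normrN; lra.
rewrite subrr normr0 sub0r normrN normr_id.
by apply: le_trans (ler_normB _ _) _; lra.
Qed.

Lemma approx_isometry_near0 phi e : approx_isometry phi e -> `|phi 0| <= 2 * e.
Proof.
move=> [phi_dist phi_dense]; have B0 : `|0 : X| <= 1 by rewrite normr0.
have e_ge0 : 0 <= e by have := phi_dist 0 0 B0 B0; rewrite !subrr !normr0 subrr normr0.
set c := phi 0; have [->|c0] := eqVneq c 0; first by rewrite normr0 mulr_ge0.
pose u := - (`|c|^-1 *: c).
have u1 : `|u| = 1 by rewrite normrN normrZ normfV normr_id mulVf ?normr_eq0.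
have uc : `|u - c| = 1 + `|c|.
  have -> : u - c = - ((`|c|^-1 + 1) *: c) by rewrite scalerDl scale1r opprD.
  by rewrite normrN normrZ ger0_norm ?mulrDl ?mulVf ?mul1r ?normr_eq0 // addr_ge0.
have [x x1 phixu] : exists2 x, `|x| <= 1 & `|phi x - u| <= e by apply: phi_dense; rewrite u1.
have := phi_dist x 0 x1 B0; rewrite subr0 -/c ler_norml => /andP[_ phixc].
have := ler_normD (u - phi x) (phi x - c); rewrite addrA subrK uc (distrC u).
lra.
Qed.

Lemma approx_isometry_preimage phi e : approx_isometry phi e ->
  exists psi : Y -> X, forall y, `|y| <= 1 -> `|psi y| <= 1 /\ `|phi (psi y) - y| <= e.
Proof.
move=> [_ phi_dense].
have /choice[psi psiP] : forall y, exists x : X,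
    `|y| <= 1 -> `|x| <= 1 /\ `|phi x - y| <= e.
  move=> y; have [/phi_dense[x x1 phixy]|_] := boolP (`|y| <= 1); first by exists x.
  by exists 0.
by exists psi.
Qed.

End ApproxIsometry.

Section UltraproductIsometry.
Local Unset Implicit Arguments.
Variables (R : realType) (X Y : nat -> normedModType R) (U : set_system nat).
Hypotheses (U_ultra : UltraFilter U) (U_nonprincipal : forall n, ~ U [set n]).
Variables (phi : forall n, X n -> Y n) (eps : nat -> R).
Hypotheses (eps_gt0 : forall n, 0 < eps n) (eps_cvg0 : eps @ \oo --> 0).
Hypothesis phi_approx : forall n, approx_isometry (phi n) (eps n).
Local Notation DX := (@dprod R (fun n => X n)).
Local Notation DY := (@dprod R (fun n => Y n)).
Local Notation SX := (ultra_subseminorm X U_ultra).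
Local Notation SY := (ultra_subseminorm Y U_ultra).

Let s n := Num.sqrt (eps n).

Let s_gt0 n : 0 < s n.
Proof. by rewrite sqrtr_gt0. Qed.

Let s_cvg0 : s @ \oo --> 0.
Proof. by rewrite -sqrtr0; apply: (cvg_comp _ _ eps_cvg0); exact: sqrt_continuous. Qed.

Let eps_div_s n : (s n)^-1 * eps n = s n.
Proof. by rewrite -[eps n](@sqr_sqrtr _ (eps n)) ?ltW // expr2 mulKf ?gt_eqF. Qed.

Let psi n : Y n -> X n := proj1_sig (cid (approx_isometry_preimage (phi_approx n))).
Let psiP n (w : Y n) : `|w| <= 1 -> `|psi n w| <= 1 /\ `|phi n (psi n w) - w| <= eps n :=
  proj2_sig (cid (approx_isometry_preimage (phi_approx n))) w.

(* The junk value 0 is taken only for finitely many [n] when [x] is bounded. *)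
Definition blowup (x : DX) : DY := fun n =>
  if `|s n *: x n| <= 1 then (s n)^-1 *: (phi n (s n *: x n) - phi n 0) else 0.

Definition blowup_inv (y : DY) : DX := fun n =>
  let w := s n *: y n + phi n 0 in if `|w| <= 1 then (s n)^-1 *: psi n w else 0.

Lemma blowup0 : blowup 0 = 0.
Proof.
apply: functional_extensionality_dep => n.
by rewrite /blowup dprodE scaler0 normr0 ler01 subrr scaler0.
Qed.

Lemma blowup_dist n x y : `|s n *: x n| <= 1 -> `|s n *: y n| <= 1 ->
  `| `|blowup x n - blowup y n| - `|x n - y n| | <= s n.
Proof.
move=> x1 y1; rewrite /blowup x1 y1 -scalerBr opprB addrA subrK.
have xy : `|x n - y n| = (s n)^-1 * `|s n *: x n - s n *: y n|.
  by rewrite -scalerBr normrZ gtr0_norm // mulKf // lt0r_neq0.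
rewrite xy normrZ gtr0_norm ?invr_gt0 // -mulrBr normrM gtr0_norm ?invr_gt0 //.
rewrite -[X in _ <= X]eps_div_s; apply: ler_wpM2l; first by rewrite invr_ge0 ltW.
by case: (phi_approx n) => phi_dist _; exact: phi_dist.
Qed.

Lemma near_scaled_ball (x : DX) : linfty_bounded x ->
  \forall n \near \oo, `|s n *: x n| <= 1.
Proof.
move=> [M xM]; have sM0 : (fun n => s n * M) @ \oo --> 0.
  by rewrite -(mul0r M); exact: cvgM s_cvg0 (cvg_cst M).
near=> n; rewrite normrZ gtr0_norm //.
apply: le_trans (ler_wpM2l (ltW (s_gt0 n)) (xM n)) _.
by apply: le_trans (ler_norm _) _; near: n; exact: cvgr0_norm_le sM0 _ ltr01.
Unshelve. all: by end_near. Qed.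

Lemma blowup_bounded (x : DX) : linfty_bounded x -> linfty_bounded (blowup x).
Proof.
move=> [M xM]; have [K sK] := bounded_seq_cvg s_cvg0.
have M_ge0 : 0 <= M := le_trans (normr_ge0 _) (xM 0%N).
have K_ge0 : 0 <= K := le_trans (normr_ge0 _) (sK 0%N).
exists (M + K) => n; have [x1|x1] := boolP (`|s n *: x n| <= 1); last first.
  by rewrite /blowup (negbTE x1) normr0 addr_ge0.
have h0 : `|s n *: (0 : DX) n| <= 1 by rewrite dprodE scaler0 normr0.
have := blowup_dist n x (0 : DX) x1 h0; rewrite blowup0 !dprodE !subr0 ler_norml => /andP[_].
by have := xM n; have := sK n; have := ler_norm (s n); lra.
Qed.

Lemma blowup_isometry : sisometry SX SY blowup.
Proof.
split=> [|x y bx bY]; first exact: blowup_bounded.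
apply: (eq_ulim_near U_ultra U_nonprincipal _ s_cvg0).
  exact: bounded_seq_norm (sdomB (S := SX) bx bY).
near=> n; rewrite !dprodE; apply: blowup_dist.
  by near: n; exact: near_scaled_ball.
by near: n; exact: near_scaled_ball.
Unshelve. all: by end_near. Qed.

Lemma blowup_inv_le n (y : DY) : `|blowup_inv y n| <= `|y n| + 2 * s n.
Proof.
rewrite /blowup_inv; set w := s n *: y n + phi n 0.
have [w1|_] := boolP (`|w| <= 1); last first.
  by rewrite normr0 addr_ge0 // mulr_ge0 // ltW.
have [psi1 phipsi] := psiP n w w1; have [phi_dist _] := phi_approx n.
have B0 : `|0 : X n| <= 1 by rewrite normr0.
have := phi_dist _ _ psi1 B0; rewrite subr0 ler_norml => /andP[psi_le _].
have := ler_normD (phi n (psi n w) - w) (w - phi n 0).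
rewrite addrA subrK addrK normrZ gtr0_norm // => phi_le.
have psi_le' : `|psi n w| <= 2 * eps n + s n * `|y n| by lra.
rewrite normrZ gtr0_norm ?invr_gt0 //.
have si_ge0 : 0 <= (s n)^-1 by rewrite invr_ge0 ltW.
apply: le_trans (ler_wpM2l si_ge0 psi_le') _.
by rewrite mulrDr mulrCA eps_div_s mulrA mulVf ?mul1r ?lt0r_neq0 //; lra.
Qed.

Lemma blowup_inv_bounded (y : DY) : linfty_bounded y -> linfty_bounded (blowup_inv y).
Proof.
move=> [M yM]; have [K sK] := bounded_seq_cvg s_cvg0.
exists (M + 2 * K) => n; apply: le_trans (blowup_inv_le n y) _.
by have := yM n; have := sK n; have := ler_norm (s n); lra.
Qed.

Lemma blowupK_near (y : DY) : linfty_bounded y ->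
  \forall n \near \oo, `|blowup (blowup_inv y) n - y n| <= s n.
Proof.
move=> [M yM].
have w0 : (fun n => s n * M + 2 * eps n) @ \oo --> 0.
  rewrite -(addr0 0) -{1}(mul0r M) -[X in _ + X](mulr0 (2 : R)).
  exact: cvgD (cvgM s_cvg0 (cvg_cst M)) (cvgM (cvg_cst (2 : R)) eps_cvg0).
near=> n; set w := s n *: y n + phi n 0.
have w1 : `|w| <= 1.
  apply: le_trans (ler_normD _ _) _; rewrite normrZ gtr0_norm //.
  have := approx_isometry_near0 (phi_approx n).
  have := ler_wpM2l (ltW (s_gt0 n)) (yM n).
  have : s n * M + 2 * eps n <= 1.
    by apply: le_trans (ler_norm _) _; near: n; exact: cvgr0_norm_le w0 _ ltr01.
  lra.
have [psi1 phipsi] := psiP n w w1.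
have s_inv : s n *: blowup_inv y n = psi n w.
  by rewrite /blowup_inv -/w w1 scalerA mulfV ?scale1r ?lt0r_neq0.
rewrite /blowup s_inv psi1.
have -> : (s n)^-1 *: (phi n (psi n w) - phi n 0) - y n = (s n)^-1 *: (phi n (psi n w) - w).
  by rewrite {2}/w opprD addrA addrAC !scalerBr scalerA mulVf ?lt0r_neq0 // scale1r.
rewrite normrZ gtr0_norm ?invr_gt0 // -[X in _ <= X]eps_div_s.
by apply: ler_wpM2l; first by rewrite invr_ge0 ltW.
Unshelve. all: by end_near. Qed.

Lemma blowup_onto : sonto SX SY blowup.
Proof.
move=> y bY; exists (blowup_inv y); first exact: blowup_inv_bounded.
rewrite /= /useminorm (eq_ulim_near U_ultra U_nonprincipal (v := fun=> 0) _ s_cvg0).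
- exact: cvgn_ulim (cvg_cst 0).
- by exists 0 => n; rewrite normr0.
- near=> n; rewrite subr0 normr_id !dprodE; near: n; exact: blowupK_near.
Unshelve. all: by end_near. Qed.

Theorem approx_isometric_ultraproducts : ultraproducts_isometric X Y U.
Proof.
exists blowup; split.
- exact: blowup_bounded.
- by move=> a x y bx bY; exact: (sisometry_linear (conj blowup_isometry blowup_onto) blowup0).
- move=> x bx; have := sisometry_dist blowup_isometry bx (linfty_bounded0 X).
  by rewrite blowup0 !subr0.
- exact: blowup_onto.
Qed.
End UltraproductIsometry.

(** * Gromov-Hausdorff distance *)

Lemma metric_dist_le (R : realType) (Z : Type) (d : Z -> Z -> R) (u v u' v' : Z) :
  is_metric d -> `|d u v - d u' v'| <= d u u' + d v v'.
Proof.
move=> [_ [_ [d_sym d_tri]]]; rewrite ler_norml.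
have := d_tri u u' v; have := d_tri u' v' v; have := d_tri u' u v'; have := d_tri u v v'.
by rewrite (d_sym u' u) (d_sym v' v); lra.
Qed.

Section Hausdorff.
Variables (R : realType) (Z : Type) (d : Z -> Z -> R) (A B : set Z) (r : R).
Hypothesis dAB : (hausdorff_dist d A B < r%:E)%E.

Lemma hausdorff_dist_ltl a : A a -> exists2 b, B b & d a b < r.
Proof.
move=> Aa; move: dAB; rewrite /hausdorff_dist gt_max => /andP[dAB_lt _].
have /ereal_inf_lt[_ [b Bb <-]] : (ereal_inf [set (d a b)%:E | b in B] < r%:E)%E.
  by apply: le_lt_trans dAB_lt; apply: ereal_sup_ubound; exists a.
by rewrite lte_fin; exists b.
Qed.

Lemma hausdorff_dist_ltr b : B b -> exists2 a, A a & d a b < r.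
Proof.
move=> Bb; move: dAB; rewrite /hausdorff_dist gt_max => /andP[_ dAB_lt].
have /ereal_inf_lt[_ [a Aa <-]] : (ereal_inf [set (d a b)%:E | a in A] < r%:E)%E.
  by apply: le_lt_trans dAB_lt; apply: ereal_sup_ubound; exists b.
by rewrite lte_fin; exists a.
Qed.

End Hausdorff.

Lemma dGH_approx_isometry (R : realType) (X Y : normedModType R) (g : R) :
  (dGH X Y < g%:E)%E -> exists phi : X -> Y, approx_isometry phi (2 * g).
Proof.
move=> /ereal_inf_lt[_ [Z [d [f [h [d_metric f_iso h_iso ->]]]]] dH].
have [_ [_ [d_sym d_tri]]] := d_metric.
have /choice[phi phiP] : forall x : X, exists y : Y,
    `|x| <= 1 -> `|y| <= 1 /\ d (f x) (h y) < g.
  move=> x; have [x1|_] := boolP (`|x| <= 1); last by exists 0.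
  have [_ [y y1 <-] dxy] := hausdorff_dist_ltl dH (ex_intro2 _ _ x x1 erefl).
  by exists y.
exists phi; split=> [x x' x1 x'1|y y1].
  have [phix1 dx] := phiP x x1; have [phix'1 dx'] := phiP x' x'1.
  rewrite -(h_iso _ _ phix1 phix'1) -(f_iso _ _ x1 x'1).
  apply: le_trans (metric_dist_le _ _ _ _ d_metric) _.
  by rewrite (d_sym (h _)) (d_sym (h (phi x'))); lra.
have [_ [x x1 <-] dxy] := hausdorff_dist_ltr dH (ex_intro2 _ _ y y1 erefl).
exists x => //; have [phix1 dx] := phiP x x1.
rewrite -(h_iso _ _ phix1 y1); have := d_tri (h (phi x)) (f x) (h y).
by rewrite (d_sym (h (phi x)) (f x)); lra.
Qed.

Lemma dGH_cvg0_approx_isometries (R : realType) (X Y : nat -> normedModType R) :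
  (fun n => dGH (X n) (Y n)) @ \oo --> 0%:E ->
  exists (phi : forall n, X n -> Y n) (eps : nat -> R),
    [/\ forall n, 0 < eps n, eps @ \oo --> 0 & forall n, approx_isometry (phi n) (eps n)].
Proof.
move=> /(fine_cvgP _ 0)[dGH_fin dGH_fine0].
pose g n := `|fine (dGH (X n) (Y n))| + harmonic n.
have g_gt0 n : 0 < g n by rewrite ltr_pwDr ?harmonic_gt0.
have g_cvg0 : g @ \oo --> 0.
  have := cvgD (cvg_norm dGH_fine0) (@cvg_harmonic R).
  by rewrite normr0 addr0 => g_cvg0; exact: g_cvg0.
(* The zero map, a 2-isometry, serves for the finitely many n with dGH >= g n. *)
pose eps n := if (dGH (X n) (Y n) < (g n)%:E)%E then 2 * g n else 2.
have phi_ex n : exists phi : X n -> Y n, approx_isometry phi (eps n).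
  rewrite /eps; case: ifP => [/dGH_approx_isometry //|_].
  by exists (fun=> 0); exact: approx_isometry_cst0.
exists (fun n => proj1_sig (cid (phi_ex n))), eps; split.
- by move=> n; rewrite /eps; case: ifP => _; rewrite ?mulr_gt0.
- have : (fun n => 2 * g n) @ \oo --> 0.
    by rewrite -(mulr0 2); exact: cvgM (cvg_cst _) g_cvg0.
  apply: cvg_trans; apply: near_eq_cvg; near=> n.
  rewrite /eps ifT // -(fineK (near dGH_fin n _)) // lte_fin.
  by apply: le_lt_trans (ler_norm _) _; rewrite ltrDl harmonic_gt0.
- by move=> n; exact: proj2_sig (cid (phi_ex n)).
Unshelve. all: by end_near. Qed.

Theorem proposition3p5 (R : realType) (X Y : nat -> completeNormedModType R) :
  (fun n => dGH (X n) (Y n)) @ \oo --> 0%:E ->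
  forall U : set_system nat, UltraFilter U -> (forall n : nat, ~ U [set n]) ->
  ultraproducts_isometric X Y U.
Proof.
move=> dGH_cvg0 U U_ultra U_nonprincipal.
have [phi [eps [eps_gt0 eps_cvg0 phi_approx]]] := dGH_cvg0_approx_isometries dGH_cvg0.
exact: approx_isometric_ultraproducts U_ultra U_nonprincipal phi eps eps_gt0 eps_cvg0
  phi_approx.
Qed.
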